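(* Let $\alpha>4$ and $0<N_1\le N_2$. Consider the two-player Random Access Game in which player $i\in\{1,2\}$ chooses $\Lambda_i\in[0,N_i]$ and receives payoff \[ U_i(\Lambda_1,\Lambda_2)=\sup_{\beta>0}\ \Lambda_i\log(1+\beta)\,e^{-(\Lambda_1+\Lambda_2)\beta^{2/\alpha}} . \] Let $\Lambda^*(\alpha/2)$ be the unique positive solution $L$ of \[ \frac{\alpha}{4}=\left(1+L^{\alpha/4}\right)\log\left(1+L^{-\alpha/4}\right). \] Then the game has a unique Nash equilibrium. If $\sqrt{\Lambda^*(\alpha/2)}<N_1$, this equilibrium is \[ (\Lambda_1^*,\Lambda_2^* )=\left(\sqrt{\Lambda^*(\alpha/2)},\sqrt{\Lambda^*(\alpha/2)}\right). \] Otherwise it is given by $\Lambda_1^*=N_1$ and $\Lambda_2^*=\min(x,N_2)$, where $x$ is the solution of \[ N_1=x\left(\frac{\alpha}{2\left(1+x^{\alpha/2}\right)\log\left(1+x^{-\alpha/2}\right)}-1\right). \]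
   Context: A Nash equilibrium is a pair $(\Lambda_1^*,\Lambda_2^* )\in[0,N_1]\times[0,N_2]$ such that $\Lambda_1^*$ maximizes $U_1(\cdot,\Lambda_2^* )$ over $[0,N_1]$ and $\Lambda_2^*$ maximizes $U_2(\Lambda_1^*,\cdot)$ over $[0,N_2]$. Here $\log$ is the natural logarithm. *)

From HB Require Import structures.
From mathcomp Require Import all_boot all_order all_algebra.
From mathcomp Require Import all_classical all_reals all_analysis.
Set Implicit Arguments. Unset Strict Implicit. Unset Printing Implicit Defensive.
Import Order.TTheory GRing.Theory Num.Theory.
Local Open Scope classical_set_scope.
Local Open Scope ring_scope.

(* Payoff of a player choosing rate li when the two rates are l1, l2:
   sup_{beta > 0} li * log(1+beta) * exp(-(l1+l2) * beta^(2/alpha)),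
   taken in the extended reals (it is always finite on the strategy sets). *)
Definition rag_payoff (R : realType) (alpha li l1 l2 : R) : \bar R :=
  ereal_sup [set (li * ln (1 + b) * expR (- (l1 + l2) * b `^ (2 / alpha)))%:E
            | b in [set b : R | 0 < b]].

Definition U1 (R : realType) (alpha l1 l2 : R) : \bar R := rag_payoff alpha l1 l1 l2.
Definition U2 (R : realType) (alpha l1 l2 : R) : \bar R := rag_payoff alpha l2 l1 l2.

Definition is_nash (R : realType) (alpha N1 N2 l1 l2 : R) : Prop :=
  [/\ 0 <= l1 <= N1, 0 <= l2 <= N2,
      (forall m : R, 0 <= m <= N1 -> (U1 alpha m l2 <= U1 alpha l1 l2)%E) &
      (forall m : R, 0 <= m <= N2 -> (U2 alpha l1 m <= U2 alpha l1 l2)%E)].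

From HB Require Import structures.
From mathcomp Require Import all_boot all_order all_algebra.
From mathcomp Require Import all_classical all_reals all_analysis.
From mathcomp.algebra_tactics Require Import ring lra.
Import Order.TTheory GRing.Theory Num.Theory.
Import numFieldNormedType.Exports.
Local Open Scope classical_set_scope.
Local Open Scope ring_scope.
Set Implicit Arguments. Unset Strict Implicit. Unset Printing Implicit Defensive.

(* Write [t = b ^ (2 / alpha)] and [S = l1 + l2]. The map [w |-> ln (ln (1 + expR w))]
   is concave with derivative [psi (expR w)], [psi b = b / ((1 + b) ln (1 + b))], so by
   tangent-line bounds a [b] with [psi b = (2 / alpha) S t] attains the supremum defining
   the payoffs, and player [i] best responds iff [l_i] maximizes [m * expR (- m * t)] on
   [[0, N_i]], i.e. [l_i = min N_i t^-1]. Equilibria are thus the solutions [t] of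
   [psi (t ^ (alpha / 2)) = (2 / alpha) (min (N1 t) 1 + min (N2 t) 1)], whose left side
   decreases and right side increases in [t]: there is exactly one. Both players at
   rate [t^-1] give the equation for [L]; player 1 capped at [N1] gives the one for [x]. *)

Section Psi.
Variable R : realType.
Implicit Types b x y : R.

Lemma ln_lt_sub1 x : 0 < x -> x != 1 -> ln x < x - 1.
Proof.
move=> x0 x1; have : ln x != 0 by rewrite ln_eq0.
by move=> /expR_gt1Dx; rewrite lnK ?posrE // => h; lra.
Qed.

Lemma ln1Dx_gt0 x : 0 < x -> 0 < ln (1 + x).
Proof. by move=> x0; apply: ln_gt0; lra. Qed.

Lemma lt_ln1Dx x : 0 < x -> ln (1 + x) < x.
Proof.
move=> x0; have := @ln_lt_sub1 (1 + x); rewrite gt_eqF; last by lra.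
by move=> /(_ ltac:(lra) isT); lra.
Qed.

Lemma ln1Dx_gt_div x : 0 < x -> x / (1 + x) < ln (1 + x).
Proof.
move=> x0; have x1 : 0 < 1 + x by lra.
have := @ln_lt_sub1 (1 + x)^-1; rewrite invr_gt0 invr_eq1 gt_eqF; last by lra.
rewrite lnV ?posrE // => /(_ x1 isT).
have -> : (1 + x)^-1 - 1 = - (x / (1 + x)) by field; lra.
lra.
Qed.

Definition psi b := b / ((1 + b) * ln (1 + b)).

Lemma psi_lt1 b : 0 < b -> psi b < 1.
Proof.
move=> b0; have := ln1Dx_gt_div b0.
rewrite /psi ltr_pdivrMr ?ltr_pdivrMr ?mulr_gt0 ?ln1Dx_gt0 //; lra.
Qed.

Lemma psi_gt b : 0 < b -> (1 + b)^-1 < psi b.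
Proof.
move=> b0; have := lt_ln1Dx b0.
rewrite /psi ltr_pdivlMr ?mulr_gt0 ?ln1Dx_gt0 //; last by lra.
by rewrite mulrA mulVf ?mul1r // gt_eqF //; lra.
Qed.

Lemma is_derive_ln1Dx y : 0 <= y ->
  is_derive y 1 (fun z : R => ln (1 + z)) (1 + y)^-1.
Proof.
move=> y0; have y1 : 0 < 1 + y by lra.
have D : is_derive y 1 (fun z : R => 1 + z) 1.
  by apply: is_derive_eq; rewrite add0r mulr1.
by have := is_derive1_comp (is_derive1_ln y1) D; rewrite mulr1.
Qed.

Lemma is_derive_mul_ln1Dx y : 0 <= y ->
  is_derive y 1 (fun z : R => (1 + z) * ln (1 + z)) (ln (1 + y) + 1).
Proof.
move=> y0; have D : is_derive y 1 (fun z : R => 1 + z) 1.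
  by apply: is_derive_eq; rewrite add0r mulr1.
have := is_deriveM D (is_derive_ln1Dx y0).
move=> H; apply: is_derive_eq.
by rewrite /GRing.scale /= mulr1 mulfV; [lra | rewrite gt_eqF //; lra].
Qed.

Lemma is_derive_within_continuous (f df : R -> R) a c :
  (forall x, a <= x <= c -> is_derive x 1 f (df x)) ->
  {within [set` `[a, c]], continuous f}.
Proof.
move=> H; apply: derivable_within_continuous => x.
by rewrite in_itv /= => /H [].
Qed.

(* The cross-multiplied inequality is [F b1 < F b2] for the increasing map
   [F y = b1 (1 + y) ln (1 + y) - (1 + b1) ln (1 + b1) y]. *)
Lemma psi_decr b1 b2 : 0 < b1 -> b1 < b2 -> psi b2 < psi b1.
Proof.
move=> b10 b12; have b20 : 0 < b2 by lra.
set D1 := (1 + b1) * ln (1 + b1).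
have D1p : 0 < D1 by rewrite mulr_gt0 ?ln1Dx_gt0 //; lra.
have D2p : 0 < (1 + b2) * ln (1 + b2) by rewrite mulr_gt0 ?ln1Dx_gt0 //; lra.
pose F y := b1 * ((1 + y) * ln (1 + y)) - D1 * y.
have dF y : b1 <= y -> is_derive y 1 F (b1 * (ln (1 + y) + 1) - D1).
  move=> hy; have H := is_deriveZ b1 (is_derive_mul_ln1Dx (ltW (lt_le_trans b10 hy))).
  have H' : is_derive y 1 (fun z : R => D1 * z) D1.
    by apply: is_derive_eq; rewrite /GRing.scale /= mulr1.
  exact: is_deriveB H H'.
have [c] : exists2 c, c \in `]b1, b2[ &
    F b2 - F b1 = (b1 * (ln (1 + c) + 1) - D1) * (b2 - b1).
  apply: MVT => //; first by move=> x /andP[/ltW /dF].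
  by apply: is_derive_within_continuous => x /andP[/dF].
rewrite in_itv /= => /andP[c1 c2] Hc.
have lc : ln (1 + b1) < ln (1 + c) by rewrite ltr_ln ?posrE; lra.
have lb := lt_ln1Dx b10.
have Fpos : 0 < F b2 - F b1.
  rewrite Hc mulr_gt0 //; last by lra.
  have : b1 * ln (1 + b1) < b1 * ln (1 + c) by rewrite ltr_pM2l.
  rewrite /D1; lra.
have : b2 * D1 < b1 * ((1 + b2) * ln (1 + b2)) by move: Fpos; rewrite /F /D1; lra.
by rewrite /psi -/D1 ltr_pdivrMr // mulrAC ltr_pdivlMr.
Qed.

Lemma psi_derivable b : 0 < b -> derivable psi b 1.
Proof.
move=> b0.
have -> : psi = ((fun z : R => z) * (fun z : R => ((1 + z) * ln (1 + z))^-1))%R.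
  by apply/funext => z; rewrite /psi.
apply: derivableM; first exact: derivable_id.
apply: derivableV; first by rewrite gt_eqF // mulr_gt0 ?ln1Dx_gt0 //; lra.
by case: (is_derive_mul_ln1Dx (ltW b0)).
Qed.

(* [psi (t ^ a) - (c t + e)] is positive at a small [t], where
   [psi (t ^ a) > (1 + t)^-1 >= 1 - t], and negative at [2 / c], where [psi < 1 < c t]. *)
Lemma psi_powR_ivt (a c e : R) : 1 <= a -> 0 < c -> 0 <= e < 1 ->
  exists2 t, 0 < t & psi (t `^ a) = c * t + e.
Proof.
move=> a1 c0 /andP[e0 e1].
pose h t := psi (t `^ a) - (c * t + e).
pose t0 := (1 - e) / (2 * (c + 1)); pose t1 := 2 / c.
have t0p : 0 < t0 by rewrite divr_gt0 //; lra.
have t0e : t0 * (2 * (c + 1)) = 1 - e by rewrite mulfVK //; lra.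
have t1e : t1 * c = 2 by rewrite mulfVK //; lra.
have t1p : 0 < t1 by rewrite divr_gt0 //; lra.
have t01 : t0 < t1 by nra.
have dh t : 0 < t -> derivable h t 1.
  move=> tp; apply: derivableB; last first.
    by apply: derivableD; [case: (is_deriveZ c (is_derive_id t 1)) | exact: derivable_cst].
  apply/derivable1_diffP; apply: differentiable_comp.
    by apply/derivable1_diffP; case: (is_derive1_powR a tp).
  by apply/derivable1_diffP/psi_derivable/powR_gt0.
have ch : {within [set` `[t0, t1]], continuous h}.
  apply: derivable_within_continuous => x; rewrite in_itv /= => /andP[hx _].
  by apply: dh; lra.
have h0 : 0 < h t0.
  have pa : t0 `^ a <= t0 by apply: ge1r_powR => //; rewrite t0p /=; nra.
  have := psi_gt (powR_gt0 a t0p).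
  have : (1 + t0)^-1 <= (1 + t0 `^ a)^-1.
    by rewrite lef_pV2 ?posrE; have := powR_gt0 a t0p; lra.
  have : 1 - t0 <= (1 + t0)^-1 by rewrite -div1r ler_pdivlMr; [nra | lra].
  rewrite /h; nra.
have h1 : h t1 < 0 by have := psi_lt1 (powR_gt0 a t1p); rewrite /h; nra.
have hv : Num.min (h t0) (h t1) <= 0 <= Num.max (h t0) (h t1).
  by rewrite ge_min le_max (ltW h0) (ltW h1) orbT.
have [t] := IVT (ltW t01) ch hv; rewrite in_itv /= => /andP[ht0 _] ht.
by exists t; [lra | move: ht; rewrite /h; lra].
Qed.

Lemma is_derive_lnln1DexpR (w : R) :
  is_derive w 1 (fun w : R => ln (ln (1 + expR w))) (psi (expR w)).
Proof.
have e0 := expR_gt0 w.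
have H1 := is_derive1_comp (is_derive_ln1Dx (ltW e0)) (is_derive_expR w).
have H2 := @is_derive1_comp R (@ln R) (fun z => ln (1 + expR z)) w _ _
  (is_derive1_ln (ln1Dx_gt0 e0)) H1.
apply: is_derive_eq; rewrite /psi /=; field.
by rewrite !gt_eqF ?ln1Dx_gt0 //; lra.
Qed.

Lemma lnln1DexpR_tangent (w w0 : R) :
  ln (ln (1 + expR w)) <= ln (ln (1 + expR w0)) + psi (expR w0) * (w - w0).
Proof.
set G := fun w : R => ln (ln (1 + expR w)).
have mvt a c : a < c -> exists2 z, z \in `]a, c[ & G c - G a = psi (expR z) * (c - a).
  move=> ac; apply: MVT => //; first by move=> x _; exact: is_derive_lnln1DexpR.
  by apply: is_derive_within_continuous => x _; exact: is_derive_lnln1DexpR.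
rewrite -/(G w) -/(G w0).
case: (ltgtP w w0) => [hw|hw|->]; last by rewrite subrr mulr0 addr0.
- have [z] := mvt _ _ hw; rewrite in_itv /= => /andP[z1 z2] Hz.
  have : psi (expR w0) < psi (expR z) by apply: psi_decr; rewrite ?expR_gt0 ?ltr_expR.
  nra.
- have [z] := mvt _ _ hw; rewrite in_itv /= => /andP[z1 z2] Hz.
  have : psi (expR z) < psi (expR w0) by apply: psi_decr; rewrite ?expR_gt0 ?ltr_expR.
  nra.
Qed.

Lemma lnln1Dx_tangent b b0 : 0 < b -> 0 < b0 ->
  ln (ln (1 + b)) <= ln (ln (1 + b0)) + psi b0 * (ln b - ln b0).
Proof.
by move=> bp b0p; have := lnln1DexpR_tangent (ln b) (ln b0); rewrite !lnK ?posrE.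
Qed.

End Psi.

Section StationaryBound.
Variable R : realType.

(* Take logarithms and use the tangent bounds of the convex [expR] and of the concave
   [w |-> ln (ln (1 + expR w))] in the variables [(ln m, ln b)]: at a stationary [b0]
   the terms in [ln b - ln b0] cancel, and the one in [ln m - ln l] has the sign
   of [1 - l * b0 ^ d], which the last hypothesis controls. *)
Lemma payoff_le_stationary (d l l' m b0 b : R) :
  0 < d -> 0 < l -> 0 <= l' -> 0 < m -> 0 < b0 -> 0 < b ->
  psi b0 = d * (l + l') * b0 `^ d ->
  (ln m - ln l) * (1 - l * b0 `^ d) <= 0 ->
  m * ln (1 + b) * expR (- (m + l') * b `^ d) <=
  l * ln (1 + b0) * expR (- (l + l') * b0 `^ d).
Proof.
move=> d0 l0 l'0 m0 b00 b0' hpsi hm.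
have lb := ln1Dx_gt0 b0'; have lb0 := ln1Dx_gt0 b00.
set t := b `^ d; set t0 := b0 `^ d.
have tE : t = expR (d * ln b) by rewrite /t /powR gt_eqF.
have t0E : t0 = expR (d * ln b0) by rewrite /t0 /powR gt_eqF.
have t0p : 0 < t0 by rewrite t0E expR_gt0.
set X := ln m - ln l; set Y := d * (ln b - ln b0).
have expR_tangent (u v : R) : expR v * (1 + (u - v)) <= expR u.
  have -> : expR u = expR v * expR (u - v) by rewrite -expRD addrC subrK.
  by rewrite ler_pM2l ?expR_gt0 ?expR_ge1Dx.
have E1 : l * t0 * (1 + X + Y) <= m * t.
  have := expR_tangent (ln m + d * ln b) (ln l + d * ln b0).
  rewrite !expRD !lnK ?posrE // -tE -t0E /X /Y.
  by congr (_ <= _); congr (_ * _); ring.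
have E2 : t0 * (1 + Y) <= t.
  have := expR_tangent (d * ln b) (d * ln b0).
  by rewrite -tE -t0E /Y; congr (_ <= _); congr (_ * _); ring.
have E3 : l' * (t0 * (1 + Y)) <= l' * t by rewrite ler_wpM2l.
have T := lnln1Dx_tangent b0' b00.
have T2 : psi b0 * (ln b - ln b0) = (l * t0 + l' * t0) * Y by rewrite hpsi /Y /t0; ring.
have key : ln m + ln (ln (1 + b)) - (m + l') * t <=
           ln l + ln (ln (1 + b0)) - (l + l') * t0.
  have hX : X * (1 - l * t0) <= 0 by [].
  have -> : ln m = ln l + X by rewrite /X; ring.
  nra.
have lnM3 (x y z : R) : 0 < x -> 0 < y -> x * y * expR z = expR (ln x + ln y + z).
  by move=> x0 y0; rewrite !expRD !lnK ?posrE.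
by rewrite lnM3 // lnM3 // ler_expR !mulNr; lra.
Qed.

End StationaryBound.

Section BestRate.
Variable R : realType.
Implicit Types N l m t x y : R.

Lemma xexpN_lt_expN1 x : 0 <= x -> x != 1 -> x * expR (- x) < expR (-1).
Proof.
move=> x0 x1; have : x < expR (x - 1).
  by have := @expR_gt1Dx R (x - 1); rewrite subr_eq0 => /(_ x1); lra.
have -> : expR (-1) = expR (- x) * expR (x - 1) by rewrite -expRD; congr expR; ring.
by rewrite mulrC ltr_pM2l ?expR_gt0.
Qed.

Lemma xexpN_lt x y : 0 <= x -> x < y -> y <= 1 -> x * expR (- x) < y * expR (- y).
Proof.
move=> x0 xy y1; set e := y - x.
have e0 : 0 < e by rewrite /e; lra.
have F1 : 1 - e < expR (- e).
  by have := @expR_gt1Dx R (- e); rewrite oppr_eq0 gt_eqF // => /(_ isT); lra.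
have EF : expR e * expR (- e) = 1 by rewrite -expRD subrr expR0.
have E1 : 1 < expR e by have := @expR_gt1Dx R e; rewrite gt_eqF // => /(_ isT); lra.
have -> : expR (- x) = expR (- y) * expR e by rewrite -expRD; congr expR; rewrite /e; ring.
suff : x * expR e < y by rewrite mulrCA [y * _]mulrC ltr_pM2l ?expR_gt0.
have : x * (expR e - 1) <= (1 - e) * (expR e - 1) by rewrite ler_wpM2r /e; lra.
have : (1 - e) * (expR e - 1) < expR (- e) * (expR e - 1) by rewrite ltr_pM2r; lra.
rewrite /e in EF F1 *; nra.
Qed.

(* [l = min N t^-1], the maximizer of [m |-> m * expR (- (m * t))] on [[0, N]]. *)
Definition best_rate N l t := [/\ 0 < l, l <= N, l * t <= 1 & l * t = 1 \/ l = N].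

Lemma best_rate_inner N l t : 0 < l -> l <= N -> l * t = 1 -> best_rate N l t.
Proof. by move=> l0 lN lt; split => //; [rewrite lt | left]. Qed.

Lemma best_rate_cap N t : 0 < N -> N * t <= 1 -> best_rate N N t.
Proof. by move=> N0 Nt; split => //; right. Qed.

Lemma best_rate_of_max N l t : 0 < t -> 0 < N -> 0 <= l <= N ->
  (forall m, 0 <= m <= N -> m * expR (- (m * t)) <= l * expR (- (l * t))) ->
  best_rate N l t.
Proof.
move=> t0 N0 /andP[l0 lN] H.
have lt0 : 0 <= l * t by rewrite mulr_ge0 // ltW.
case: (leP 1 (N * t)) => Nt.
- have m0 : 0 <= t^-1 <= N.
    by rewrite invr_ge0 (ltW t0) /= -[N]mulr1 -[t^-1]mul1r ler_pdivrMr //; lra.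
  have := ler_wpM2l (ltW t0) (H _ m0).
  rewrite mulVf ?gt_eqF // mulrA mulfV ?gt_eqF // mul1r mulrA [t * l]mulrC => h.
  have lt1 : l * t = 1.
    by apply/eqP; apply: contraT => /(xexpN_lt_expN1 lt0); lra.
  apply: (best_rate_inner _ lN lt1); rewrite lt_def l0 andbT.
  by apply/negP => /eqP l00; move: lt1; rewrite l00 mul0r; lra.
- have l_eq_N : l = N.
    apply/eqP; apply: contraT => hne.
    have ltt : l * t < N * t by rewrite ltr_pM2r // lt_neqAle hne.
    have := xexpN_lt lt0 ltt (ltW Nt).
    have := ler_wpM2l (ltW t0) (H _ (ltac:(rewrite (ltW N0) lexx) : 0 <= N <= N)).
    by rewrite !mulrA ![t * _]mulrC; lra.
  by rewrite l_eq_N; apply: best_rate_cap => //; lra.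
Qed.

Lemma best_rate_uniq N l m t : 0 < t -> best_rate N l t -> best_rate N m t -> l = m.
Proof.
move=> t0 [l0 lN lt1 hl] [m0 mN mt1 hm].
case: hl => hl; case: hm => hm.
- by apply: (mulIf (x := t)); [rewrite gt_eqF | rewrite hl hm].
- by apply/le_anti/andP; split; [rewrite hm | rewrite -(ler_pM2r t0) hl].
- by apply/le_anti/andP; split; [rewrite -(ler_pM2r t0) hm | rewrite hl].
- by rewrite hl hm.
Qed.

Lemma best_rate_mulr_le N l m t s : 0 < t -> t < s ->
  best_rate N l t -> best_rate N m s -> l * t <= m * s.
Proof. by move=> t0 ts [l0 lN lt1 _] [m0 mN ms1 [->|->]] //; nra. Qed.

End BestRate.

Section Game.
Variable R : realType.
Variable alpha : R.
Hypothesis alpha_gt4 : 4 < alpha.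
Implicit Types N S l m s t x : R.

Let alpha_gt0 : 0 < alpha. Proof. by move: alpha_gt4; lra. Qed.

Let exp_gt0 : 0 < 2 / alpha. Proof. by rewrite divr_gt0. Qed.

Let alpha_half_ge1 : 1 <= alpha / 2.
Proof. by rewrite ler_pdivlMr //; move: alpha_gt4; lra. Qed.

Lemma rag_payoff_le (li l1 l2 M : R) :
  (forall b, 0 < b -> li * ln (1 + b) * expR (- (l1 + l2) * b `^ (2 / alpha)) <= M) ->
  (rag_payoff alpha li l1 l2 <= M%:E)%E.
Proof. by move=> H; apply: ge_ereal_sup => _ [b b0 <-]; rewrite lee_fin; exact: H. Qed.

Lemma rag_payoff_ge (li l1 l2 b : R) : 0 < b ->
  ((li * ln (1 + b) * expR (- (l1 + l2) * b `^ (2 / alpha)))%:E <=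
    rag_payoff alpha li l1 l2)%E.
Proof. by move=> b0; apply: ereal_sup_ubound; exists b. Qed.

Lemma rag_payoffC (li l1 l2 : R) : rag_payoff alpha li l1 l2 = rag_payoff alpha li l2 l1.
Proof. by rewrite /rag_payoff (addrC l1 l2). Qed.

Lemma powR_alphaK t : 0 <= t -> (t `^ (alpha / 2)) `^ (2 / alpha) = t.
Proof.
move=> t0; rewrite -powRrM.
have -> : alpha / 2 * (2 / alpha) = 1 by field; rewrite gt_eqF.
exact: powRr1.
Qed.

(* The first-order condition [psi b = (2 / alpha) S b ^ (2 / alpha)] of the supremum
   defining the payoffs when [S] is the total rate, in the variable [t = b ^ (2 / alpha)]. *)
Definition stationary S t := psi (t `^ (alpha / 2)) = 2 / alpha * S * t.

Lemma stationary_lt S S' t t' : 0 < t -> t < t' ->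
  stationary S t -> stationary S' t' -> S' * t' < S * t.
Proof.
move=> t0 tt' hS hS'.
have : psi (t' `^ (alpha / 2)) < psi (t `^ (alpha / 2)).
  apply: psi_decr; first exact: powR_gt0.
  by apply: gt0_ltr_powR; rewrite ?divr_gt0 ?nnegrE //; lra.
by rewrite hS hS' -!(mulrA (2 / alpha)) ltr_pM2l.
Qed.

Lemma stationary_le S S' t t' : 0 < t -> t <= t' ->
  stationary S t -> stationary S' t' -> S' * t' <= S * t.
Proof.
move=> t0; rewrite le_eqVlt => /predU1P[<- hS hS'|tt' hS hS'].
  by move: hS'; rewrite /stationary hS -!(mulrA (2 / alpha)) => /(mulfI (lt0r_neq0 exp_gt0)) ->.
exact/ltW/(stationary_lt t0 tt').
Qed.

Lemma stationary_exists S : 0 < S -> exists2 t, 0 < t & stationary S t.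
Proof.
move=> S0; have e01 : 0 <= (0 : R) < 1 by rewrite lexx ltr01.
have [t t0 ht] := psi_powR_ivt alpha_half_ge1 (mulr_gt0 exp_gt0 S0) e01.
by exists t; rewrite // /stationary ht addr0.
Qed.

Lemma best_rate_payoff_max N l l' t m : 0 < t -> 0 <= l' ->
  stationary (l + l') t -> best_rate N l t -> 0 <= m <= N ->
  (rag_payoff alpha m m l' <= rag_payoff alpha l l l')%E.
Proof.
move=> t0 l'0 hS [l0 lN lt hcap] /andP[m0 mN].
set b0 := t `^ (alpha / 2).
have b00 : 0 < b0 by apply: powR_gt0.
apply: le_trans (rag_payoff_ge _ _ _ b00); apply: rag_payoff_le => b b0p.
case: (eqVneq m 0) => [->|mn0].
  by rewrite !mul0r mulr_ge0 ?expR_ge0 // mulr_ge0 ?ltW ?ln1Dx_gt0.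
have mp : 0 < m by rewrite lt_def mn0.
apply: (payoff_le_stationary exp_gt0 l0 l'0 mp b00 b0p); rewrite (powR_alphaK (ltW t0)) //.
case: hcap => [->|lN']; first by rewrite subrr mulr0.
have : ln m <= ln l by rewrite ler_ln ?posrE // lN'.
by move=> h; rewrite mulr_le0_ge0 //; lra.
Qed.

Lemma payoff_max_best_rate N l l' t : 0 < N -> 0 < t -> 0 <= l' -> 0 <= l <= N ->
  stationary (l + l') t ->
  (forall m, 0 <= m <= N -> (rag_payoff alpha m m l' <= rag_payoff alpha l l l')%E) ->
  best_rate N l t.
Proof.
move=> N0 t0 l'0 hl hS H.
set b0 := t `^ (alpha / 2).
have b00 : 0 < b0 by apply: powR_gt0.
have lb0 := ln1Dx_gt0 b00.
have up : (rag_payoff alpha l l l' <=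
    (l * ln (1 + b0) * expR (- (l + l') * b0 `^ (2 / alpha)))%:E)%E.
  apply: rag_payoff_le => b b0p.
  case: (eqVneq l 0) => [->|ln0]; first by rewrite !mul0r.
  have lp : 0 < l by rewrite lt_def ln0; case/andP: hl.
  apply: (payoff_le_stationary exp_gt0 lp l'0 lp b00 b0p).
    by rewrite (powR_alphaK (ltW t0)).
  by rewrite subrr mul0r.
apply: best_rate_of_max => // m hm.
have := le_trans (rag_payoff_ge m m l' b00) (le_trans (H m hm) up).
rewrite lee_fin (powR_alphaK (ltW t0)) //.
have split_expR (x : R) : x * ln (1 + b0) * expR (- (x + l') * t) =
    x * expR (- (x * t)) * (ln (1 + b0) * expR (- (l' * t))).
  have -> : expR (- (x + l') * t) = expR (- (x * t)) * expR (- (l' * t)).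
    by rewrite -expRD; congr expR; ring.
  ring.
by rewrite !split_expR ler_pM2r ?mulr_gt0 ?expR_gt0.
Qed.

Definition equilibrium_at N1 N2 l1 l2 t :=
  [/\ 0 < t, stationary (l1 + l2) t, best_rate N1 l1 t & best_rate N2 l2 t].

Lemma equilibrium_at_nash N1 N2 l1 l2 t :
  equilibrium_at N1 N2 l1 l2 t -> is_nash alpha N1 N2 l1 l2.
Proof.
move=> [t0 hS b1 b2]; have b1' := b1; have b2' := b2.
case: b1' b2' => l10 l1N _ _ [l20 l2N _ _].
split; first (by rewrite (ltW l10) l1N); first by rewrite (ltW l20) l2N.
- by move=> m hm; apply: (best_rate_payoff_max t0 (ltW l20) hS b1 hm).
- move=> m hm; rewrite /U2 (rag_payoffC _ l1 m) (rag_payoffC _ l1 l2).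
  by apply: (best_rate_payoff_max t0 (ltW l10) _ b2 hm); rewrite /stationary addrC.
Qed.

(* If both rates vanished, player 1 could earn a positive payoff by deviating to [N1]. *)
Lemma nash_rates_gt0 N1 N2 l1 l2 : 0 < N1 -> is_nash alpha N1 N2 l1 l2 -> 0 < l1 + l2.
Proof.
move=> N10 [/andP[l10 _] /andP[l20 _] H1 _].
rewrite lt_def addr_ge0 // andbT; apply/negP => /eqP S0.
have [l1E l2E] : l1 = 0 /\ l2 = 0 by lra.
subst l1 l2.
have := H1 N1; rewrite (ltW N10) lexx => /(_ isT).
have z : (rag_payoff alpha 0 0 0 <= 0%:E)%E by apply: rag_payoff_le => b _; rewrite !mul0r.
move=> /le_trans/(_ z)/(le_trans (rag_payoff_ge N1 N1 0 (@ltr01 R))); rewrite lee_fin.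
have : 0 < N1 * ln (1 + 1) * expR (- (N1 + 0) * 1 `^ (2 / alpha)).
  by rewrite mulr_gt0 ?expR_gt0 // mulr_gt0 // ln1Dx_gt0.
lra.
Qed.

Lemma nash_equilibrium_at N1 N2 l1 l2 : 0 < N1 -> 0 < N2 ->
  is_nash alpha N1 N2 l1 l2 -> exists t, equilibrium_at N1 N2 l1 l2 t.
Proof.
move=> N10 N20 hN; have S0 := nash_rates_gt0 N10 hN.
case: hN => hl1 hl2 H1 H2.
have [t t0 hS] := stationary_exists S0.
have l10 : 0 <= l1 by case/andP: hl1.
have l20 : 0 <= l2 by case/andP: hl2.
exists t; split => //.
- exact: payoff_max_best_rate N10 t0 l20 hl1 hS H1.
- apply: payoff_max_best_rate N20 t0 l10 hl2 _ _; first by rewrite /stationary addrC.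
  by move=> m hm; have := H2 m hm; rewrite /U2 (rag_payoffC _ l1 m) (rag_payoffC _ l1 l2).
Qed.

Lemma equilibrium_at_nlt N1 N2 l1 l2 t m1 m2 s :
  equilibrium_at N1 N2 l1 l2 t -> equilibrium_at N1 N2 m1 m2 s -> ~ t < s.
Proof.
move=> [t0 ht c1 c2] [s0 hs d1 d2] ts.
have := stationary_lt t0 ts ht hs.
have := best_rate_mulr_le t0 ts c1 d1; have := best_rate_mulr_le t0 ts c2 d2.
lra.
Qed.

Lemma equilibrium_at_uniq N1 N2 l1 l2 t m1 m2 s :
  equilibrium_at N1 N2 l1 l2 t -> equilibrium_at N1 N2 m1 m2 s -> (m1, m2) = (l1, l2).
Proof.
move=> E1 E2; case: (ltgtP t s) => [ts|st|ts].
- by case: (equilibrium_at_nlt E1 E2 ts).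
- by case: (equilibrium_at_nlt E2 E1 st).
- rewrite -ts in E2; case: E1 E2 => [t0 _ c1 c2] [_ _ d1 d2].
  by rewrite (best_rate_uniq t0 c1 d1) (best_rate_uniq t0 c2 d2).
Qed.

Lemma stationary_sqrt L : 0 < L ->
  alpha / 4 = (1 + L `^ (alpha / 4)) * ln (1 + L `^ (- (alpha / 4))) ->
  stationary (Num.sqrt L + Num.sqrt L) (Num.sqrt L)^-1.
Proof.
move=> L0 hL; have sL0 : 0 < Num.sqrt L by rewrite sqrtr_gt0.
rewrite /stationary.
have -> : (Num.sqrt L)^-1 `^ (alpha / 2) = L `^ (- (alpha / 4)).
  rewrite -powR12_sqrt; last exact: ltW.
  by rewrite -powRN -powRrM; congr powR; field.
set B := L `^ (- (alpha / 4)).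
have B0 : 0 < B by apply: powR_gt0.
have lB := ln1Dx_gt0 B0.
move: hL; rewrite -[L `^ (alpha / 4)]invrK -powRN -/B => hL.
have key : (1 + B) * ln (1 + B) = B * (alpha / 4).
  by rewrite hL; field; rewrite gt_eqF.
rewrite /psi key; field.
by rewrite !gt_eqF.
Qed.

Lemma stationary_boundary_root N1 x : 0 < x ->
  N1 = x * (alpha / (2 * (1 + x `^ (alpha / 2)) * ln (1 + x `^ (- (alpha / 2)))) - 1) ->
  stationary (N1 + x) x^-1.
Proof.
move=> x0 hx; rewrite /stationary.
set P := x `^ (alpha / 2).
have P0 : 0 < P by apply: powR_gt0.
have -> : x^-1 `^ (alpha / 2) = P^-1.
  apply: (mulfI (lt0r_neq0 P0)); rewrite mulfV ?gt_eqF //.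
  by rewrite -powRM ?invr_ge0 ?ltW // mulfV ?gt_eqF // powR1.
rewrite powRN -/P in hx.
have lP := ln1Dx_gt0 (eq_ind_r is_true P0 (invr_gt0 P) : 0 < P^-1).
rewrite hx /psi; field.
by rewrite !gt_eqF //; lra.
Qed.

Lemma boundary_root_exists N1 : 0 < N1 -> exists2 x, 0 < x & stationary (N1 + x) x^-1.
Proof.
move=> N10; have e01 : 0 <= 2 / alpha < 1.
  by rewrite (ltW exp_gt0) ltr_pdivrMr //; move: alpha_gt4; lra.
have [t t0 ht] := psi_powR_ivt alpha_half_ge1 (mulr_gt0 exp_gt0 N10) e01.
exists t^-1; first by rewrite invr_gt0.
by rewrite /stationary invrK ht; field; rewrite !gt_eqF.
Qed.

Lemma symmetric_equilibrium N1 N2 s : 0 < s -> s < N1 -> N1 <= N2 ->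
  stationary (s + s) s^-1 -> equilibrium_at N1 N2 s s s^-1.
Proof.
move=> s0 sN1 N12 hs; have ss : s * s^-1 = 1 by rewrite mulfV ?gt_eqF.
by split; rewrite ?invr_gt0 //; apply: (best_rate_inner s0 _ ss); lra.
Qed.

(* Comparing the first-order conditions at [s^-1] and at [x^-1] places [x] in [[N1, s]]. *)
Lemma boundary_equilibrium N1 N2 s x : 0 < N1 -> N1 <= N2 -> 0 < s -> N1 <= s ->
  stationary (s + s) s^-1 -> 0 < x -> stationary (N1 + x) x^-1 ->
  exists t, equilibrium_at N1 N2 N1 (Num.min x N2) t.
Proof.
move=> N10 N12 s0 N1s hs x0 hx.
have q0 : 0 < x^-1 by rewrite invr_gt0.
have xq : x * x^-1 = 1 by rewrite mulfV ?gt_eqF.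
have ss : (s + s) * s^-1 = 2 by field; rewrite gt_eqF.
have x_le_s : x <= s.
  rewrite leNgt; apply/negP => sx.
  have := stationary_lt q0 (_ : x^-1 < s^-1) hx hs; rewrite ltf_pV2 ?posrE // => /(_ sx).
  by rewrite ss mulrDl xq; nra.
have N1_le_x : N1 <= x.
  have := stationary_le (_ : 0 < s^-1) (_ : s^-1 <= x^-1) hs hx.
  rewrite invr_gt0 lef_pV2 ?posrE // => /(_ s0 x_le_s).
  by rewrite ss mulrDl xq; nra.
have N1q : N1 * x^-1 <= 1 by rewrite -xq ler_pM2r.
case: (leP x N2) => [xN2|N2x].
  exists x^-1; split => //.
  - exact: best_rate_cap.
  - exact: best_rate_inner x0 xN2 xq.
have S0 : 0 < N1 + N2 by lra.
have [t t0 ht] := stationary_exists S0.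
have N2t : N2 * t <= 1.
  rewrite leNgt; apply/negP => N2t.
  have qt : x^-1 < t by nra.
  by have := stationary_lt q0 qt hx ht; nra.
exists t; split => //; apply: best_rate_cap => //; first by nra.
lra.
Qed.

Lemma equilibrium_exists N1 N2 s : 0 < N1 -> N1 <= N2 -> 0 < s ->
  stationary (s + s) s^-1 -> exists l : R * R, exists t, equilibrium_at N1 N2 l.1 l.2 t.
Proof.
move=> N10 N12 s0 hs; case: (ltP s N1) => sN1.
  by exists (s, s), s^-1; exact: symmetric_equilibrium.
have [x x0 hx] := boundary_root_exists N10.
have [t Et] := boundary_equilibrium N10 N12 s0 sN1 hs x0 hx.
by exists (N1, Num.min x N2), t.
Qed.

End Game.

Unset Implicit Arguments.

Theorem theorem5 (R : realType) (alpha N1 N2 L : R) :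
  4 < alpha -> 0 < N1 -> N1 <= N2 ->
  0 < L ->
  alpha / 4 = (1 + L `^ (alpha / 4)) * ln (1 + L `^ (- (alpha / 4))) ->
  exists l : R * R,
    [/\ is_nash alpha N1 N2 l.1 l.2,
        (forall m1 m2 : R, is_nash alpha N1 N2 m1 m2 -> (m1, m2) = l),
        (Num.sqrt L < N1 -> l = (Num.sqrt L, Num.sqrt L)) &
        (~ (Num.sqrt L < N1) ->
           forall x : R, 0 < x ->
             N1 = x * (alpha / (2 * (1 + x `^ (alpha / 2)) * ln (1 + x `^ (- (alpha / 2)))) - 1) ->
             l = (N1, Num.min x N2))].
Proof.
move=> ha N10 N12 L0 hL.
have N20 : 0 < N2 by lra.
have s0 : 0 < Num.sqrt L by rewrite sqrtr_gt0.
have hs := stationary_sqrt ha L0 hL.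
have [[l1 l2] [t Et]] := equilibrium_exists ha N10 N12 s0 hs.
exists (l1, l2); split.
- exact: equilibrium_at_nash Et.
- move=> m1 m2 /(nash_equilibrium_at ha N10 N20) [s Es].
  exact: equilibrium_at_uniq Et Es.
- move=> sN1; exact: equilibrium_at_uniq (symmetric_equilibrium s0 sN1 N12 hs) Et.
- move=> /negP; rewrite -leNgt => N1s x x0 hx.
  have hx' := stationary_boundary_root ha x0 hx.
  have [u Eu] := boundary_equilibrium ha N10 N12 s0 N1s hs x0 hx'.
  exact: equilibrium_at_uniq Eu Et.
Qed.
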